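(* Let $\mathcal D$ be a filtered $\varphi$-module of dimension $d$ and $N\ge0$. Then the $\mathcal H$-module $L_N(\mathcal D)$ has rank $d$.
   Context: Let $p$ be an odd prime, $u$ a topological generator of $1+p\mathbb Z_p$, $K_n=\mathbb Q_p(\mu_{p^n})$. $\mathcal H$ is the ring of power series in $\mathbb Q_p[[x]]$ converging on the open unit disc of $\mathbb C_p$. A filtered $\varphi$-module is a $d$-dimensional $\mathbb Q_p$-vector space $\mathcal D$ with a bijective linear map $\varphi$ and a decreasing exhaustive separated filtration $\mathrm{Fil}^\bullet\mathcal D$; $t_{HT,d}$ is the largest integer $i$ with $\mathrm{Fil}^i\mathcal D\neq0$. $L_N(\mathcal D)$ is the $\mathcal H$-submodule of $\mathcal H\otimes_{\mathbb Q_p}\mathcal D$ of all $g$ such that $(1\otimes\varphi)^{-(n+1)}g(u^j\zeta-1)\in K_n\otimes\mathrm{Fil}^j\mathcal D$ for all integers $j\le t_{HT,d}$, all $n\ge N$ and all roots of unity $\zeta$ of order $p^n$. *)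

From HB Require Import structures.
From mathcomp Require Import all_boot all_order all_algebra.
From mathcomp Require Import reals.
Set Implicit Arguments.
Unset Strict Implicit.
Unset Printing Implicit Defensive.
Import Order.TTheory GRing.Theory Num.Theory.
Local Open Scope ring_scope.

Section Padic.
Variables (R : realType) (C : closedFieldType) (F : fieldType).

Definition seq_cvg_to (T : zmodType) (abs : T -> R) (s : nat -> T) (l : T) :=
  forall eps : R, 0 < eps -> exists M : nat, forall m, (M <= m)%N -> abs (s m - l) < eps.

Definition cauchy_seq (T : zmodType) (abs : T -> R) (s : nat -> T) :=
  forall eps : R, 0 < eps -> exists M : nat,
    forall m n, (M <= m)%N -> (M <= n)%N -> abs (s m - s n) < eps.

Definition series_sums (abs : C -> R) (a : nat -> C) (l : C) :=
  seq_cvg_to abs (fun m => \sum_(k < m) a k) l.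

Variables (abs : C -> R) (iota : {rmorphism F -> C}).

(* C is a complete non-archimedean valued algebraically closed field
   (a model of C_p), F (embedded by iota) is the closure of Q in it,
   i.e. a model of Q_p, with |p| = 1/p. *)
Definition padic_setting (p : nat) :=
  [/\ (forall x, 0 <= abs x) /\ (forall x, (abs x == 0) = (x == 0)),
      forall x y, abs (x * y) = abs x * abs y,
      forall x y, abs (x + y) <= Num.max (abs x) (abs y),
      abs (p%:R) = (p%:R)^-1 &
      [/\ forall s : nat -> C, cauchy_seq abs s -> exists l, seq_cvg_to abs s l,
          forall s : nat -> F, cauchy_seq (fun x => abs (iota x)) s ->
            exists l, seq_cvg_to (fun x => abs (iota x)) s l &
          forall (x : F) (eps : R), 0 < eps ->
            exists q : rat, abs (iota x - iota (ratr q)) < eps]].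

(* u is a topological generator of 1 + p Z_p *)
Definition top_generator (p : nat) (u : F) :=
  abs (iota u - 1) <= (p%:R)^-1 /\
  forall x : F, abs (iota x - 1) <= (p%:R)^-1 ->
    forall eps : R, 0 < eps -> exists k : int, abs (iota u ^ k - iota x) < eps.

(* filtered phi-module structure on D = F^d (row vectors); phi acts by v |-> v *m phi;
   Fil i is (the row space of) a matrix *)
Definition filtered_phi_module (d : nat) (phi : 'M[F]_d) (Fil : int -> 'M[F]_d) :=
  [/\ phi \in unitmx,
      forall i : int, (Fil (i + 1)%R <= Fil i)%MS,
      forall v : 'rV[F]_d, exists i : int, (v <= Fil i)%MS &
      forall v : 'rV[F]_d, (forall i : int, (v <= Fil i)%MS) -> v = 0].

(* j <= t_{HT,d} (largest i with Fil^i <> 0) *)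
Definition le_tHT (d : nat) (Fil : int -> 'M[F]_d) (j : int) :=
  exists i : int, j <= i /\ Fil i != 0.

(* K_n = Q_p(mu_{p^n}) inside C *)
Definition in_Kn (p n : nat) (x : C) :=
  exists z : C, (p ^ n)%N.-primitive_root z /\
    exists P : {poly F}, x = (map_poly iota P).[z].

(* K_n (x) W, W a sub-F-space of F^d, viewed inside C^d *)
Definition in_Kn_tensor (p n d : nat) (W : 'M[F]_d) (v : 'rV[C]_d) :=
  exists c : 'rV[C]_d, (forall i, in_Kn p n (c 0 i)) /\ v = c *m map_mx iota W.

(* the ring H: power series over Q_p converging on the open unit disc of C *)
Definition inH (a : nat -> F) :=
  forall z : C, abs z < 1 -> exists l, series_sums abs (fun k => iota (a k) * z ^+ k) l.

Definition hmul (a b : nat -> F) (k : nat) : F := \sum_(i < k.+1) a i * b (k - i)%N.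

(* L_N(D) as a predicate on H (x) D = H^d *)
Definition in_LN (p d : nat) (phi : 'M[F]_d) (Fil : int -> 'M[F]_d) (u : F) (N : nat)
    (g : 'I_d -> nat -> F) :=
  (forall i, inH (g i)) /\
  forall (j : int) (n : nat) (zeta : C),
    le_tHT Fil j -> (N <= n)%N -> (p ^ n)%N.-primitive_root zeta ->
    forall v : 'rV[C]_d,
      (forall i, series_sums abs
                   (fun k => iota (g i k) * (iota u ^ j * zeta - 1) ^+ k) (v 0 i)) ->
      in_Kn_tensor p n (Fil j) (v *m map_mx iota (invmx phi ^+ n.+1)).

Definition H_independent (d m : nat) (fam : 'I_m -> 'I_d -> nat -> F) :=
  forall h : 'I_m -> nat -> F, (forall k, inH (h k)) ->
    (forall (i : 'I_d) (n : nat), \sum_(k < m) hmul (h k) (fam k i) n = 0) ->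
    forall k n, h k n = 0.

(* rank of an H-submodule L of H^d (H a domain): maximal number of
   H-linearly independent elements of L *)
Definition H_rank (d : nat) (L : ('I_d -> nat -> F) -> Prop) (r : nat) :=
  (exists fam : 'I_r -> 'I_d -> nat -> F, (forall k, L (fam k)) /\ H_independent fam) /\
  (forall fam : 'I_r.+1 -> 'I_d -> nat -> F, (forall k, L (fam k)) -> ~ H_independent fam).

End Padic.

From HB Require Import structures.
From mathcomp Require Import all_boot all_order all_algebra.
From mathcomp Require Import reals.
From mathcomp Require Import boolp zify ring lra.
Set Implicit Arguments.
Unset Strict Implicit.
Unset Printing Implicit Defensive.
Import Order.TTheory GRing.Theory Num.Theory.
Local Open Scope ring_scope.

(* Any d + 1 vectors of H^d are H-linearly dependent, because H is a subring of the
   integral domain Q_p[[x]] and Gaussian elimination needs no division.  Conversely,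
   since the filtration is exhaustive and separated, there are j0 <= T with
   Fil^j = D for j <= j0 and Fil^j = 0 for j > T.  With l(x) = log(1 + x) put
   f = prod_(j0 < j <= T) (l - j log u), a nonzero element of H.  At x = u^j zeta - 1
   one has l(x) = log(u^j zeta) = j log u, which lies in Q_p, so f vanishes there for
   j0 < j <= T, while for j <= j0 the condition is empty; hence f e_1, ..., f e_d lie
   in L_N(D), and they are independent.  The
   identity log(ab) = log a + log b comes from log a = lim (a^(p^m) - 1) / p^m. *)

Section FormalPowerSeries.
Variable F : fieldType.

Record powser := Powser { coefps : nat -> F }.
HB.instance Definition _ := gen_eqMixin powser.
HB.instance Definition _ := gen_choiceMixin powser.

Lemma powser_ext (a b : powser) : coefps a =1 coefps b -> a = b.
Proof. by case: a; case: b => f g /= /funext ->. Qed.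

Definition zerops := Powser (fun _ => 0).
Definition addps a b := Powser (fun n => coefps a n + coefps b n).
Definition oppps a := Powser (fun n => - coefps a n).

Lemma addpsA : associative addps.
Proof. by move=> *; apply: powser_ext => n /=; rewrite addrA. Qed.
Lemma addpsC : commutative addps.
Proof. by move=> *; apply: powser_ext => n /=; rewrite addrC. Qed.
Lemma add0ps : left_id zerops addps.
Proof. by move=> *; apply: powser_ext => n /=; rewrite add0r. Qed.
Lemma addNps : left_inverse zerops oppps addps.
Proof. by move=> *; apply: powser_ext => n /=; rewrite addNr. Qed.
HB.instance Definition _ := GRing.isZmodule.Build powser addpsA addpsC add0ps addNps.

Definition poly_upto (a : nat -> F) k : {poly F} := \poly_(i < k.+1) a i.

Lemma coef_poly_upto a k i : (i <= k)%N -> (poly_upto a k)`_i = a i.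
Proof. by move=> le_ik; rewrite coef_poly ltnS le_ik. Qed.

Lemma hmul_poly_upto a b k : hmul a b k = (poly_upto a k * poly_upto b k)`_k.
Proof.
rewrite coefM; apply: eq_bigr => i _.
by rewrite !coef_poly_upto ?leq_subr // -ltnS.
Qed.

Lemma coefM_upto (P P' Q Q' : {poly F}) k :
  (forall i, (i <= k)%N -> P`_i = P'`_i) -> (forall i, (i <= k)%N -> Q`_i = Q'`_i) ->
  (P * Q)`_k = (P' * Q')`_k.
Proof.
move=> eqP eqQ; rewrite !coefM; apply: eq_bigr => i _.
by rewrite eqP ?eqQ ?leq_subr // -ltnS.
Qed.

Definition mulps a b := Powser (hmul (coefps a) (coefps b)).
Definition oneps := Powser (fun n => (n == 0)%:R).

Lemma mulpsA : associative mulps.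
Proof.
move=> a b c; apply: powser_ext => k; rewrite /= !hmul_poly_upto.
have upto_mul x y i : (i <= k)%N -> (poly_upto (hmul x y) k)`_i =
    (poly_upto x k * poly_upto y k)`_i.
  move=> le_ik; rewrite coef_poly_upto // hmul_poly_upto.
  by apply: coefM_upto => j le_ji; rewrite !coef_poly_upto // (leq_trans le_ji).
transitivity ((poly_upto (coefps a) k *
    (poly_upto (coefps b) k * poly_upto (coefps c) k))`_k).
  by apply: coefM_upto => // i /upto_mul.
by rewrite mulrA; apply: coefM_upto => // i /upto_mul.
Qed.

Lemma mulpsC : commutative mulps.
Proof. by move=> a b; apply: powser_ext => k; rewrite /= !hmul_poly_upto mulrC. Qed.

Lemma mul1ps : left_id oneps mulps.
Proof.
move=> a; apply: powser_ext => k /=; rewrite hmul_poly_upto.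
have -> : poly_upto (fun n => (n == 0)%:R) k = 1.
  apply/polyP => i; rewrite coef_poly coef1; case: ifP => // /negbT.
  by rewrite -leqNgt; case: i.
by rewrite mul1r coef_poly_upto.
Qed.

Lemma mulpsDl : left_distributive mulps addps.
Proof.
move=> a b c; apply: powser_ext => k /=; rewrite /hmul -big_split /=.
by apply: eq_bigr => i _; rewrite mulrDl.
Qed.

Lemma oneps_neq0 : oneps != 0.
Proof. by apply/eqP => /(congr1 (coefps^~ 0%N)) /= /eqP; rewrite oner_eq0. Qed.

HB.instance Definition _ :=
  GRing.Zmodule_isComNzRing.Build powser mulpsA mulpsC mul1ps mulpsDl oneps_neq0.

Lemma coefps0 n : coefps 0 n = 0. Proof. by []. Qed.
Lemma coefpsM a b n : coefps (a * b) n = hmul (coefps a) (coefps b) n.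
Proof. by []. Qed.

Lemma coefps_sum I (r : seq I) (P : pred I) (f : I -> powser) n :
  coefps (\sum_(i <- r | P i) f i) n = \sum_(i <- r | P i) coefps (f i) n.
Proof. exact: (big_morph (coefps^~ n)). Qed.

Lemma powser_neq0 (a : powser) : a != 0 -> exists n, coefps a n != 0.
Proof.
move=> a_neq0; apply/not_existsP => a_eq0; move/eqP: a_neq0; apply.
by apply: powser_ext => n; apply/eqP/negPn/negP/a_eq0.
Qed.

(* The product of the lowest nonzero coefficients of [a] and [b] is a coefficient of [a * b]. *)
Lemma mulps_neq0 (a b : powser) : a != 0 -> b != 0 -> a * b != 0.
Proof.
move=> /powser_neq0 a_neq0 /powser_neq0 b_neq0.
case: (ex_minnP a_neq0) => i0 ai0 min_a; case: (ex_minnP b_neq0) => j0 bj0 min_b.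
apply/eqP => /(congr1 (coefps^~ (i0 + j0)%N)); rewrite coefpsM coefps0 /hmul.
have lt_i0 : (i0 < (i0 + j0).+1)%N by rewrite ltnS leq_addr.
rewrite (bigD1 (Ordinal lt_i0)) //= big1 ?addr0.
  by move/eqP; rewrite addKn mulf_eq0 (negbTE ai0) (negbTE bj0).
move=> i /eqP ne_i; have [lt_i|gt_i] : (i < i0 \/ i0 < i)%N.
- by case: (ltngtP i i0) => [||eq_i]; [left|right|case: ne_i; apply: val_inj].
- have /negbNE/eqP -> : ~~ (coefps a i != 0).
    by apply/negP => /min_a; rewrite leqNgt lt_i.
  by rewrite mul0r.
- have /negbNE/eqP -> : ~~ (coefps b (i0 + j0 - i) != 0).
    by apply/negP => /min_b; rewrite leqNgt; have := ltn_ord i; lia.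
  by rewrite mulr0.
Qed.

Lemma prodps_neq0 n (f : 'I_n -> powser) : (forall i, f i != 0) -> \prod_i f i != 0.
Proof.
move=> f_neq0; elim/big_ind: _ => //; [exact: oner_neq0 | exact: mulps_neq0].
Qed.

Definition constps (c : F) := Powser (fun k => if k == 0%N then c else 0).

End FormalPowerSeries.

Section SubringDependence.
Variables (A : comNzRingType) (S : A -> Prop).
Hypotheses (S1 : S 1) (SB : forall x y, S x -> S y -> S (x - y))
  (SM : forall x y, S x -> S y -> S (x * y)).
Hypothesis mulf_neq0 : forall x y : A, x != 0 -> y != 0 -> x * y != 0.

Lemma closed0 : S 0. Proof. by rewrite -(subrr 1); apply: SB. Qed.
Lemma closedN x : S x -> S (- x).
Proof. by move=> Sx; rewrite -sub0r; apply: SB => //; apply: closed0. Qed.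
Lemma closed_sum n (f : 'I_n -> A) : (forall k, S (f k)) -> S (\sum_k f k).
Proof.
move=> Sf; elim/big_ind: _ => //; first exact: closed0.
by move=> x y Sx Sy; rewrite -[y]opprK; apply/SB/closedN.
Qed.

Lemma subring_dependent d m (fam : 'I_m -> 'I_d -> A) :
  (d < m)%N -> (forall k i, S (fam k i)) ->
  exists c : 'I_m -> A,
    [/\ forall k, S (c k), exists k, c k != 0 & forall i, \sum_k c k * fam k i = 0].
Proof.
elim: d m fam => [|d IH] [//|m] fam lt_dm Sfam.
  by exists (fun _ => 1); split=> //; [exists ord0; exact: oner_neq0 | case].
have [k0 pivot|no_pivot] := pickP (fun k => fam k ord_max != 0); last first.
  have [|c [Sc nz_c rel_c]] := IH _ (fun k i => fam k (lift ord_max i)) (ltnW lt_dm).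
    by move=> k i; apply: Sfam.
  exists c; split=> // i; case: (unliftP ord_max i) => [i'|] -> //.
  by apply: big1 => k _; move/negbFE/eqP: (no_pivot k) => ->; rewrite mulr0.
(* Gaussian elimination of the last coordinate against the pivot [fam k0 ord_max]. *)
pose a := fam k0 ord_max.
pose w k i := a * fam (lift k0 k) (lift ord_max i)
              - fam (lift k0 k) ord_max * fam k0 (lift ord_max i).
have [|c' [Sc' [k1 nz_k1] rel_c']] := IH _ w lt_dm.
  by move=> k i; apply: SB; apply: SM; apply: Sfam.
pose c k := if unlift k0 k is Some k' then c' k' * a
            else - \sum_k' c' k' * fam (lift k0 k') ord_max.
have c_k0 : c k0 = - \sum_k' c' k' * fam (lift k0 k') ord_max by rewrite /c unlift_none.
have c_lift k' : c (lift k0 k') = c' k' * a by rewrite /c liftK.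
exists c; split.
- move=> k; rewrite /c; case: unliftP => [k'|] _; first by apply: SM; [apply: Sc'|apply: Sfam].
  by apply/closedN/closed_sum => k'; apply: SM; [apply: Sc'|apply: Sfam].
- by exists (lift k0 k1); rewrite c_lift; apply: mulf_neq0.
- move=> i; rewrite (bigD1_ord k0) //= c_k0.
  under eq_bigr => k' _ do rewrite c_lift.
  rewrite mulNr mulr_suml -sumrN -big_split /=.
  case: (unliftP ord_max i) => [i'|] ->; last by apply: big1 => k' _; rewrite /a; ring.
  by rewrite -[RHS](rel_c' i'); apply: eq_bigr => k' _; rewrite /w /a; ring.
Qed.

End SubringDependence.

Section Filtration.
Variables (F : fieldType) (d : nat) (Fil : int -> 'M[F]_d).
Hypothesis Fil_decr : forall i : int, (Fil (i + 1)%R <= Fil i)%MS.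

Lemma Fil_le (i j : int) : i <= j -> (Fil j <= Fil i)%MS.
Proof.
move=> le_ij; have -> : j = i + (`|j - i|%N)%:Z by lia.
elim: `|j - i|%N => [|n IH]; first by rewrite addr0.
by apply: submx_trans IH; rewrite -[n.+1]addn1 PoszD addrA.
Qed.

Lemma Fil_full_below :
  (forall v : 'rV[F]_d, exists i : int, (v <= Fil i)%MS) ->
  exists j0 : int, forall j, j <= j0 -> (1%:M <= Fil j)%MS.
Proof.
move=> exhaustive; have [f f_row] := choice (fun r : 'I_d => exhaustive (row r 1%:M)).
exists (- \sum_r (`|f r|%N)%:Z) => j le_j; apply/row_subP => r.
apply: submx_trans (f_row r) (Fil_le _).
have : (`|f r|%N)%:Z <= \sum_r0 (`|f r0|%N)%:Z by rewrite (bigD1 r) //= lerDl sumr_ge0.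
lia.
Qed.

(* A subspace of minimal rank among the [Fil n], [n : nat], lies in every [Fil i]. *)
Lemma Fil_zero_above :
  (forall v : 'rV[F]_d, (forall i : int, (v <= Fil i)%MS) -> v = 0) ->
  exists T : int, forall i : int, T < i -> Fil i = 0.
Proof.
move=> separated.
have ex_rank : exists r, `[< exists n : nat, \rank (Fil n) = r >].
  by exists (\rank (Fil 0)); apply/asboolP; exists 0%N.
case: (ex_minnP ex_rank) => r /asboolP [n0 rank_n0] min_rank.
have Fil_n0 (i : int) : (Fil n0 <= Fil i)%MS.
  case: (lerP (n0 : int) i) => [le_n0i|/ltW]; last exact: Fil_le.
  have [m i_m] : exists m : nat, i = m by exists `|i|%N; lia.
  rewrite -(mxrank_leqif_sup (Fil_le le_n0i)).2 eqn_leq mxrankS ?Fil_le //= rank_n0 i_m.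
  by apply: min_rank; apply/asboolP; exists m.
have Fil_n0_eq0 : Fil n0 = 0.
  apply/row_matrixP => k; rewrite row0; apply: separated => i.
  exact: submx_trans (row_sub k _) (Fil_n0 i).
by exists n0 => i /ltW /Fil_le; rewrite Fil_n0_eq0 submx0 => /eqP.
Qed.

Lemma le_tHT_le (T : int) j : (forall i : int, T < i -> Fil i = 0) -> le_tHT Fil j -> j <= T.
Proof.
move=> zero_T [i [le_ji Fil_i]]; apply: le_trans le_ji _; rewrite leNgt.
by apply: contraNN Fil_i => /zero_T ->.
Qed.

End Filtration.

Lemma binomial2_le_expr (R : realFieldType) (h : R) k :
  0 <= h -> 'C(k, 2)%:R * h ^+ 2 <= (1 + h) ^+ k.
Proof.
move=> h_ge0; rewrite mulr_natl [1 + h]addrC exprD1n.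
have terms_ge0 (i : 'I_k.+1) : 0 <= h ^+ i *+ 'C(k, i) by rewrite mulrn_wge0 ?exprn_ge0.
case: (ltnP k 2) => [lt_k2|le_2k]; first by rewrite bin_small // mulr0n sumr_ge0.
have lt_2k1 : (2 < k.+1)%N by [].
by rewrite (bigD1 (Ordinal lt_2k1)) //= lerDl sumr_ge0.
Qed.

Lemma natr_mul_expr_lt (R : archiRealFieldType) (r e : R) : 0 <= r -> r < 1 -> 0 < e ->
  exists K, forall k, (K <= k)%N -> k%:R * r ^+ k < e.
Proof.
move=> r_ge0 r_lt1 e_gt0; have [->|r_neq0] := eqVneq r 0.
  by exists 1%N => -[|k] //= _; rewrite expr0n mulr0.
have r_gt0 : 0 < r by rewrite lt_neqAle eq_sym r_neq0.
pose h := r^-1 - 1; have h_gt0 : 0 < h by rewrite subr_gt0 invf_gt1.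
have r_h : r = (1 + h)^-1 by rewrite addrC subrK invrK.
pose x := 2 / (e * h ^+ 2).
have x_ge0 : 0 <= x by rewrite divr_ge0 // ltW // mulr_gt0 // exprn_gt0.
exists (Num.bound x).+2 => -[//|k] le_k; have x_lt_k : x < k%:R.
  by apply: lt_le_trans (archi_boundP x_ge0) _; rewrite ler_nat; lia.
have pow_gt0 : 0 < (1 + h) ^+ k.+1 by rewrite exprn_gt0 // addr_gt0.
rewrite r_h exprVn ltr_pdivrMr //.
apply: lt_le_trans (ler_wpM2l (ltW e_gt0) (binomial2_le_expr k.+1 (ltW h_gt0))).
have bin2 : 'C(k.+1, 2)%:R = k.+1%:R * k%:R / 2 :> R.
  have := mul_bin_diag k.+1 1; rewrite bin1 /= => /(congr1 (fun n => n%:R : R)).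
  by rewrite !natrM => ->; rewrite mulrC mulKf ?pnatr_eq0.
rewrite bin2 -subr_gt0.
have -> : e * (k.+1%:R * k%:R / 2 * h ^+ 2) - k.+1%:R =
  k.+1%:R * (e * h ^+ 2 / 2) * (k%:R - x) by rewrite /x; field; rewrite ?gt_eqF.
have k_x_gt0 : 0 < k%:R - x by rewrite subr_gt0.
by rewrite !mulr_gt0 ?exprn_gt0 ?invr_gt0.
Qed.

Lemma cvg_to_cauchy (R : realType) (T : zmodType) (ab : T -> R) (s : nat -> T) l :
  (forall x y, ab (x + y) <= Num.max (ab x) (ab y)) -> (forall x, ab (- x) = ab x) ->
  seq_cvg_to ab s l -> cauchy_seq ab s.
Proof.
move=> abD abN cvg_s e /cvg_s [M HM]; exists M => m n le_m le_n.
have -> : s m - s n = (s m - l) + - (s n - l) by rewrite opprB addrA subrK.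
apply: le_lt_trans (abD _ _) _.
by rewrite gt_max abN !HM.
Qed.

Definition logc (K : fieldType) (k : nat) : K := if k == 0%N then 0 else (-1) ^+ k.+1 / k%:R.

Section UltrametricField.
Variables (R : realType) (C : closedFieldType) (abs : C -> R).
Hypotheses (abs_ge0 : forall x, 0 <= abs x) (abs_eq0 : forall x, (abs x == 0) = (x == 0))
  (absM : forall x y, abs (x * y) = abs x * abs y)
  (absD : forall x y, abs (x + y) <= Num.max (abs x) (abs y)).

Lemma abs0 : abs 0 = 0. Proof. by apply/eqP; rewrite abs_eq0. Qed.

Lemma abs1 : abs 1 = 1.
Proof.
have abs1_neq0 : abs 1 != 0 by rewrite abs_eq0 oner_eq0.
by apply: (mulfI abs1_neq0); rewrite -absM !mulr1.
Qed.

Lemma absN x : abs (- x) = abs x.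
Proof.
have absN1 : abs (-1) = 1.
  have := absM (-1) (-1); rewrite mulrNN mulr1 abs1 => sq1.
  have := abs_ge0 (-1); nra.
by rewrite -mulN1r absM absN1 mul1r.
Qed.

Lemma absB x y : abs (x - y) = abs (y - x). Proof. by rewrite -absN opprB. Qed.

Lemma absX x n : abs (x ^+ n) = abs x ^+ n.
Proof. by elim: n => [|n IH]; rewrite ?abs1 // !exprS absM IH. Qed.

Lemma absV x : abs x^-1 = (abs x)^-1.
Proof.
have [->|x_neq0] := eqVneq x 0; first by rewrite invr0 abs0 invr0.
have absx_neq0 : abs x != 0 by rewrite abs_eq0.
by apply: (mulfI absx_neq0); rewrite -absM !divff // abs1.
Qed.

Lemma abs_gt0 x : x != 0 -> 0 < abs x.
Proof. by move=> x_neq0; rewrite lt_neqAle abs_ge0 andbT eq_sym abs_eq0. Qed.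

Lemma absD_le x y e : abs x <= e -> abs y <= e -> abs (x + y) <= e.
Proof. by move=> lex ley; apply: le_trans (absD x y) _; rewrite ge_max lex ley. Qed.

Lemma absD_lt x y e : abs x < e -> abs y < e -> abs (x + y) < e.
Proof. by move=> ltx lty; apply: le_lt_trans (absD x y) _; rewrite gt_max ltx lty. Qed.

Lemma abs_sum_lt I (r : seq I) (P : pred I) (f : I -> C) e :
  0 < e -> (forall i, P i -> abs (f i) < e) -> abs (\sum_(i <- r | P i) f i) < e.
Proof.
move=> e_gt0 lt_f; apply: (big_ind (fun x => abs x < e)) => //; first by rewrite abs0.
move=> x y; exact: absD_lt.
Qed.

Lemma abs_natr_le1 n : abs n%:R <= 1.
Proof.
by elim: n => [|n IH]; rewrite ?abs0 // -addn1 natrD; apply: absD_le; rewrite ?abs1.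
Qed.

Lemma abs_addr_small x y : abs y < abs x -> abs (x + y) = abs x.
Proof.
move=> lt_yx; apply/le_anti/andP; split.
  by apply: le_trans (absD x y) _; rewrite ge_max lexx ltW.
have := absD (x + y) (- y); rewrite addrK absN le_max => /orP[//|le_xy].
by move: lt_yx; rewrite ltNge le_xy.
Qed.

Lemma cvg_to_uniq s l1 l2 : seq_cvg_to abs s l1 -> seq_cvg_to abs s l2 -> l1 = l2.
Proof.
move=> cvg1 cvg2; apply/eqP; rewrite -subr_eq0 -abs_eq0; apply/eqP/le_anti.
rewrite abs_ge0 andbT; apply/ler_addgt0Pr => e e_gt0; rewrite add0r.
case: (cvg1 e e_gt0) => M1 HM1; case: (cvg2 e e_gt0) => M2 HM2.
have -> : l1 - l2 = (s (maxn M1 M2) - l2) - (s (maxn M1 M2) - l1) by ring.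
by apply/ltW/absD_lt; rewrite ?absN; [apply: HM2 | apply: HM1]; lia.
Qed.

Lemma cvg_to_cst c : seq_cvg_to abs (fun _ => c) c.
Proof. by move=> e e_gt0; exists 0%N => m _; rewrite subrr abs0. Qed.

Lemma cvg_to_eventually s t l M0 : (forall m, (M0 <= m)%N -> s m = t m) ->
  seq_cvg_to abs s l -> seq_cvg_to abs t l.
Proof.
move=> eq_st cvg_s e e_gt0; case: (cvg_s e e_gt0) => M HM.
by exists (maxn M M0) => m le_m; rewrite -eq_st; [apply: HM|]; lia.
Qed.

Lemma cvg_toD s t l l' : seq_cvg_to abs s l -> seq_cvg_to abs t l' ->
  seq_cvg_to abs (fun m => s m + t m) (l + l').
Proof.
move=> cvg_s cvg_t e e_gt0.
case: (cvg_s e e_gt0) => M1 HM1; case: (cvg_t e e_gt0) => M2 HM2.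
exists (maxn M1 M2) => m le_m; rewrite opprD addrACA.
by apply: absD_lt; [apply: HM1 | apply: HM2]; lia.
Qed.

Lemma cvg_toN s l : seq_cvg_to abs s l -> seq_cvg_to abs (fun m => - s m) (- l).
Proof.
by move=> cvg_s e /cvg_s [M HM]; exists M => m le_m; rewrite -opprD absN; apply: HM.
Qed.

Lemma cvg_toB s t l l' : seq_cvg_to abs s l -> seq_cvg_to abs t l' ->
  seq_cvg_to abs (fun m => s m - t m) (l - l').
Proof. by move=> cvg_s /cvg_toN; apply: cvg_toD. Qed.

Lemma cvg_to_bounded s l : seq_cvg_to abs s l -> exists2 B, 0 < B & forall m, abs (s m) <= B.
Proof.
move=> /(_ 1 ltr01) [M HM].
have sum_ge0 : 0 <= \sum_(i < M) abs (s i) by apply: sumr_ge0.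
exists (Num.max (abs l) 1 + \sum_(i < M) abs (s i)) => [|m].
  by apply: ltr_wpDr => //; rewrite lt_max ltr01 orbT.
case: (ltnP m M) => [lt_mM|le_Mm].
  apply: ler_wpDl; first by rewrite le_max ler01 orbT.
  by rewrite (bigD1 (Ordinal lt_mM)) //= lerDl sumr_ge0.
apply: ler_wpDr => //; rewrite -[s m](subrK l).
by apply: le_trans (absD _ _) _; rewrite ge_max !le_max lexx (ltW (HM m le_Mm)) orbT.
Qed.

Lemma cvg_toM s t l l' : seq_cvg_to abs s l -> seq_cvg_to abs t l' ->
  seq_cvg_to abs (fun m => s m * t m) (l * l').
Proof.
move=> cvg_s cvg_t e e_gt0; have [B B_gt0 le_sB] := cvg_to_bounded cvg_s.
have l'_gt0 : 0 < abs l' + 1 by have := abs_ge0 l'; lra.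
case: (cvg_s (e / (abs l' + 1))) => [|M1 HM1]; first exact: divr_gt0.
case: (cvg_t (e / B)) => [|M2 HM2]; first exact: divr_gt0.
exists (maxn M1 M2) => m le_m.
have -> : s m * t m - l * l' = s m * (t m - l') + (s m - l) * l' by ring.
apply: absD_lt; rewrite absM.
  apply: (@le_lt_trans _ _ (B * abs (t m - l'))); first exact: ler_wpM2r.
  by rewrite mulrC -ltr_pdivlMr // HM2 //; lia.
apply: (@le_lt_trans _ _ (abs (s m - l) * (abs l' + 1))).
  by apply: ler_wpM2l; [exact: abs_ge0 | lra].
by rewrite -ltr_pdivlMr // HM1 //; lia.
Qed.

Lemma sumr_ord_sub (a : nat -> C) n m : (n <= m)%N ->
  \sum_(k < m) a k - \sum_(k < n) a k = \sum_(n <= k < m) a k.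
Proof.
move=> le_nm; rewrite -!(big_mkord xpredT) (@big_cat_nat _ _ _ n 0 m) //=.
by rewrite addrAC subrr add0r.
Qed.

Lemma abs_sum_nat_lt (a : nat -> C) n m e : 0 < e ->
  (forall k, (n <= k < m)%N -> abs (a k) < e) -> abs (\sum_(n <= k < m) a k) < e.
Proof.
by move=> e_gt0 lt_a; rewrite big_nat_cond; apply: abs_sum_lt => // k /andP[/lt_a].
Qed.

Lemma series_sums_cvg0 (a : nat -> C) l : series_sums abs a l -> seq_cvg_to abs a 0.
Proof.
move=> sum_a; have sum_a1 : seq_cvg_to abs (fun m => \sum_(k < m.+1) a k) l.
  by move=> e /sum_a [M HM]; exists M => m le_m; apply: HM; lia.
have := cvg_toB sum_a1 sum_a; rewrite subrr; apply: (cvg_to_eventually (M0 := 0)) => m _.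
by rewrite big_ord_recr /= addrAC subrr add0r.
Qed.

Lemma abs_mul_lt x y e Bx By : 0 < e -> 0 < Bx -> 0 < By -> abs x <= Bx -> abs y <= By ->
  abs x < e / By \/ abs y < e / Bx -> abs (x * y) < e.
Proof.
move=> e_gt0 Bx_gt0 By_gt0 le_x le_y [lt_x|lt_y]; rewrite absM.
  apply: (@le_lt_trans _ _ (abs x * By)); first exact: ler_wpM2l.
  by rewrite -ltr_pdivlMr.
apply: (@le_lt_trans _ _ (Bx * abs y)); first exact: ler_wpM2r.
by rewrite mulrC -ltr_pdivlMr.
Qed.

Section CauchyProduct.
Variables (a b : nat -> C) (A B : C).
Hypotheses (sum_a : series_sums abs a A) (sum_b : series_sums abs b B).

Let P (f : nat -> C) m : {poly C} := \poly_(i < m) f i.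

Lemma cauchy_product_partial_sum m :
  \sum_(k < m) \sum_(i < k.+1) a i * b (k - i)%N =
  (\sum_(k < m) a k) * (\sum_(k < m) b k) - \sum_(m <= k < m + m) (P a m * P b m)`_k.
Proof.
have sum_at1 (f : nat -> C) : \sum_(k < m) f k = (P f m).[1].
  by rewrite horner_poly; apply: eq_bigr => i _; rewrite expr1n mulr1.
rewrite !sum_at1 -hornerM (horner_coef_wide 1 (_ : size _ <= m + m)%N); last first.
  apply: leq_trans (size_polyMleq _ _) (leq_trans (leq_pred _) _).
  exact: leq_add (size_poly _ _) (size_poly _ _).
under [in RHS]eq_bigr do rewrite expr1n mulr1.
rewrite -(big_mkord xpredT) (@big_cat_nat _ _ _ m 0 (m + m)) ?leq_addr //= addrK big_mkord.
apply: eq_bigr => k _; rewrite coefM; apply: eq_bigr => i _.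
by rewrite !coef_poly !ifT //; have := ltn_ord i; have := ltn_ord k; lia.
Qed.

(* In the tail each product [a i * b (k - i)] has [i] or [k - i] at least [m / 2]. *)
Lemma cauchy_product_tail :
  seq_cvg_to abs (fun m => \sum_(m <= k < m + m) (P a m * P b m)`_k) 0.
Proof.
have a0 := series_sums_cvg0 sum_a; have b0 := series_sums_cvg0 sum_b.
have [Ba Ba_gt0 le_Ba] := cvg_to_bounded a0; have [Bb Bb_gt0 le_Bb] := cvg_to_bounded b0.
move=> e e_gt0; case: (a0 (e / Bb)) => [|M1 HM1]; first exact: divr_gt0.
case: (b0 (e / Ba)) => [|M2 HM2]; first exact: divr_gt0.
exists (2 * maxn M1 M2)%N => m le_m; rewrite subr0; apply: abs_sum_nat_lt => // k lt_k.
rewrite coefM; apply: abs_sum_lt => // i _; rewrite !coef_poly.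
case: ifP => lt_i; last by rewrite mul0r abs0.
case: ifP => lt_ki; last by rewrite mulr0 abs0.
apply: (abs_mul_lt e_gt0 Ba_gt0 Bb_gt0 (le_Ba i) (le_Bb _)).
case: (leqP M1 i) => [/HM1|lt_iM]; first by rewrite subr0; left.
by right; have := HM2 (k - i)%N ltac:(lia); rewrite subr0.
Qed.

Lemma series_sumsM :
  series_sums abs (fun k => \sum_(i < k.+1) a i * b (k - i)%N) (A * B).
Proof.
have := cvg_toB (cvg_toM sum_a sum_b) cauchy_product_tail; rewrite subr0.
by apply: (cvg_to_eventually (M0 := 0)) => m _; rewrite cauchy_product_partial_sum.
Qed.

End CauchyProduct.

Hypothesis complete : forall s : nat -> C, cauchy_seq abs s -> exists l, seq_cvg_to abs s l.

Lemma series_sums_ex (a : nat -> C) : seq_cvg_to abs a 0 -> exists l, series_sums abs a l.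
Proof.
move=> a0; apply: complete => e e_gt0; case: (a0 e e_gt0) => M HM; exists M.
have lt_a k : (M <= k)%N -> abs (a k) < e by move/HM; rewrite subr0.
suff tail n m : (M <= n)%N -> (n <= m)%N ->
    abs (\sum_(k < m) a k - \sum_(k < n) a k) < e.
  move=> m n le_m le_n; case: (leqP n m) => [|/ltnW] le; last rewrite absB; exact: tail.
move=> le_n le_nm; rewrite sumr_ord_sub //.
by apply: abs_sum_nat_lt => // k /andP[le_nk _]; apply: lt_a; lia.
Qed.

Variable p : nat.
Hypotheses (p_prime : prime p) (absp : abs p%:R = p%:R^-1).

Lemma absp_lt1 : abs p%:R < 1.
Proof. by rewrite absp invf_lt1 ?ltr0n ?prime_gt0 // ltr1n prime_gt1. Qed.

Lemma abs_natr_coprime m : coprime p m -> abs m%:R = 1.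
Proof.
move=> co_pm; have m_gt0 : (0 < m)%N.
  by case: m co_pm => //; rewrite /coprime gcdn0 => /eqP p1; move: p_prime; rewrite p1.
case: (Bezoutl p m_gt0) => a _; rewrite gcdnC (eqP co_pm) => /dvdnP [b bm].
have : abs (1 + (a * p)%:R) = 1.
  rewrite abs_addr_small abs1 // natrM absM absp.
  apply: le_lt_trans (_ : 1 * p%:R^-1 < 1); last by rewrite mul1r -absp absp_lt1.
  by apply: ler_wpM2r; [rewrite invr_ge0 ler0n | exact: abs_natr_le1].
have -> : 1 + (a * p)%:R = (b * m)%:R :> C by rewrite -bm natrD.
rewrite natrM absM => abs_bm.
apply/le_anti; rewrite abs_natr_le1 /=.
by have := abs_natr_le1 b; have := abs_ge0 b%:R; have := abs_ge0 m%:R; nra.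
Qed.

Lemma abs_natr_expp m : abs (p ^ m)%:R = ((p ^ m)%:R)^-1.
Proof. by rewrite natrX absX absp natrX exprVn. Qed.

Lemma invr_natr_le_abs k : (0 < k)%N -> (k%:R)^-1 <= abs (k%:R : C).
Proof.
move=> k_gt0; case: (pfactor_coprime p_prime k_gt0) => m co_pm k_eq.
have m_gt0 : (0 < m)%N by case: m co_pm k_eq => // _ k0; rewrite k0 mul0n in k_gt0.
rewrite {2}k_eq natrM absM abs_natr_coprime // mul1r abs_natr_expp.
rewrite lef_pV2 ?posrE ?ltr0n ?expn_gt0 ?(prime_gt0 p_prime) // ler_nat {2}k_eq.
exact: leq_pmull.
Qed.

Lemma natrC_neq0 k : (0 < k)%N -> (k%:R : C) != 0.
Proof.
move=> k_gt0; rewrite -abs_eq0; apply: contraTneq (invr_natr_le_abs k_gt0) => ->.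
by rewrite -ltNge invr_gt0 ltr0n.
Qed.

Lemma inv_abs_natr_le k : (0 < k)%N -> (abs (k%:R : C))^-1 <= k%:R.
Proof.
move=> k_gt0; have abs_gt0 : 0 < abs (k%:R : C) by apply/abs_gt0/natrC_neq0.
by rewrite -[leRHS]invrK lef_pV2 ?posrE ?invr_gt0 ?ltr0n // invr_natr_le_abs.
Qed.

Lemma abs_logc_le k : abs (logc C k) <= k%:R.
Proof.
rewrite /logc; case: eqP => [->|/eqP k_neq0]; first by rewrite abs0.
by rewrite absM absX absN abs1 expr1n mul1r absV inv_abs_natr_le // lt0n.
Qed.

Lemma log_series_ex x :
  abs x < 1 -> exists l, series_sums abs (fun k => logc C k * x ^+ k) l.
Proof.
move=> x_lt1; apply: series_sums_ex => e e_gt0.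
case: (natr_mul_expr_lt (abs_ge0 x) x_lt1 e_gt0) => K HK; exists K => k le_k.
rewrite subr0 absM absX; apply: le_lt_trans (HK k le_k).
by apply: ler_wpM2r; [apply: exprn_ge0 | apply: abs_logc_le].
Qed.

Lemma abs_prod_add1_sub1_le (t : nat -> C) n (e : R) : 0 <= e -> e <= 1 ->
  (forall s, (s < n)%N -> abs (t s) <= e) -> abs (\prod_(s < n) (1 + t s) - 1) <= e.
Proof.
move=> e_ge0 e_le1; elim: n => [|n IH] le_t; first by rewrite big_ord0 subrr abs0.
rewrite big_ord_recr /=; set P := \prod_(i < n) _.
have -> : P * (1 + t n) - 1 = (P - 1) * (1 + t n) + t n by ring.
apply: absD_le; last exact: le_t.
rewrite absM -[e]mulr1; apply: ler_pM; rewrite ?abs_ge0 //.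
  by apply: IH => s lt_sn; apply: le_t; lia.
by apply: absD_le; rewrite ?abs1 // (le_trans (le_t n _)).
Qed.

Lemma signed_binom_prod q i : (i < q)%N ->
  (-1) ^+ i * 'C(q.-1, i)%:R = \prod_(s < i) (1 - q%:R / s.+1%:R) :> C.
Proof.
elim: i => [|i IH] lt_iq; first by rewrite big_ord0 expr0 mul1r bin0.
rewrite big_ord_recr /= -IH; last lia.
have i1_neq0 : (i.+1%:R : C) != 0 by apply: natrC_neq0.
have -> : ('C(q.-1, i.+1)%:R : C) = (q.-1 - i)%N%:R * 'C(q.-1, i)%:R / i.+1%:R.
  by rewrite -natrM -mul_bin_left natrM mulrC mulKf.
rewrite natrB; last lia.
have q_gt0 : (0 < q)%N by lia.
have -> : (q.-1%:R : C) = q%:R - 1 by rewrite -{2}(prednK q_gt0) -natr1 addrK.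
by rewrite exprS; field; rewrite -natr1 addrC in i1_neq0.
Qed.

Definition binc m k : C := if k == 0%N then 0 else 'C(p ^ m, k)%:R / (p ^ m)%:R.

Lemma expp_sub1_div_sum m x :
  ((1 + x) ^+ (p ^ m) - 1) / (p ^ m)%:R = \sum_(k < (p ^ m).+1) binc m k * x ^+ k.
Proof.
rewrite [1 + x]addrC exprD1n big_ord_recl /= expr0 bin0 mulr1n addrAC subrr add0r.
rewrite big_ord_recl /binc /= mul0r add0r mulr_suml; apply: eq_bigr => i _.
by rewrite -mulr_natl mulrAC.
Qed.

Lemma binc_pred m k : (0 < k)%N -> binc m k = 'C((p ^ m).-1, k.-1)%:R / k%:R.
Proof.
move=> k_gt0; rewrite /binc ifN ?lt0n_neq0 //.
have q_gt0 : (0 < p ^ m)%N by rewrite expn_gt0 prime_gt0.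
apply/eqP; rewrite eqr_div ?natrC_neq0 //; apply/eqP; rewrite -!natrM; congr _%:R.
by rewrite mulnC -(prednK k_gt0) -mul_bin_diag prednK // mulnC.
Qed.

(* [logc k] and [binc m k] share the factor [(-1)^(k-1)/k]; the remaining factor
   of [binc m k] is a product of [k - 1] terms [1 - p^m/s], each [p^m/s]-close to [1]. *)
Lemma abs_logc_sub_binc m k : (0 < k)%N -> (k <= p ^ m)%N ->
  abs (logc C k - binc m k) <= (k ^ 2)%N%:R / (p ^ m)%:R.
Proof.
move=> k_gt0 le_kq; set q := (p ^ m)%N.
have q_gt0 : 0 < q%:R :> R by rewrite ltr0n expn_gt0 prime_gt0.
rewrite binc_pred // /logc ifN ?lt0n_neq0 // -mulrBl absM absV.
have -> : (-1) ^+ k.+1 - 'C(q.-1, k.-1)%:R =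
    (-1) ^+ k.-1 * (1 - (-1) ^+ k.-1 * 'C(q.-1, k.-1)%:R) :> C.
  rewrite -(prednK k_gt0) mulrBr mulr1 mulrA -expr2 -exprM mulnC exprM sqrrN !expr1n.
  by rewrite mul1r !exprS mulrA mulrNN mulr1 mul1r.
rewrite absM absX absN abs1 expr1n mul1r signed_binom_prod; last lia.
pose e := (k.-1)%:R / q%:R : R.
have e_ge0 : 0 <= e by rewrite divr_ge0.
have e_le1 : e <= 1 by rewrite ler_pdivrMr // mul1r ler_nat; lia.
have close : abs (1 - \prod_(s < k.-1) (1 - q%:R / s.+1%:R)) <= e.
  rewrite absB; apply: (abs_prod_add1_sub1_le (t := fun s => - (q%:R / s.+1%:R))) => //.
  move=> s lt_s.
  rewrite absN absM absV abs_natr_expp -/q.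
  apply: le_trans (_ : q%:R^-1 * s.+1%:R <= e).
    by apply: ler_wpM2l; [rewrite invr_ge0 ler0n | apply: inv_abs_natr_le].
  by rewrite /e mulrC ler_pM2r ?invr_gt0 // ler_nat.
apply: le_trans (_ : e * k%:R <= _).
  by apply: ler_pM; rewrite ?invr_ge0 ?abs_ge0 ?inv_abs_natr_le.
by rewrite /e natrX expr2 mulrAC ler_pM2r ?invr_gt0 // ler_pM2r ?ltr0n // ler_nat; lia.
Qed.

Lemma binc_logc_close x e : abs x < 1 -> 0 < e -> exists M, forall m k,
  (M <= m)%N -> (k <= p ^ m)%N -> abs ((binc m k - logc C k) * x ^+ k) < e.
Proof.
move=> x_lt1 e_gt0; case: (natr_mul_expr_lt (abs_ge0 x) x_lt1 e_gt0) => K HK.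
pose y := (K ^ 2)%N%:R / e.
have y_ge0 : 0 <= y by rewrite divr_ge0 ?ler0n // ltW.
exists (Num.bound y) => m k le_m le_kq; set q := (p ^ m)%N in le_kq *.
have q_gt0 : 0 < q%:R :> R by rewrite ltr0n expn_gt0 prime_gt0.
have K2_lt : (K ^ 2)%N%:R / q%:R < e.
  rewrite ltr_pdivrMr // mulrC -ltr_pdivrMr //; apply: lt_trans (archi_boundP y_ge0) _.
  by rewrite ltr_nat (leq_trans _ (ltn_expl m (prime_gt1 p_prime))) // ltnS.
have [->|k_gt0] := posnP k; first by rewrite /binc /logc /= subrr mul0r abs0.
have xk_ge0 : 0 <= abs x ^+ k by rewrite exprn_ge0.
have xk_le1 : abs x ^+ k <= 1 by rewrite exprn_ile1 // ltW.
have kq_le1 : k%:R / q%:R <= 1 :> R by rewrite ler_pdivrMr // mul1r ler_nat.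
rewrite absM absX absB.
apply: le_lt_trans (ler_wpM2r xk_ge0 (abs_logc_sub_binc k_gt0 le_kq)) _.
have -> : (k ^ 2)%N%:R / q%:R * abs x ^+ k = k%:R / q%:R * (k%:R * abs x ^+ k).
  by rewrite natrX; field; rewrite gt_eqF.
have kxk_ge0 : 0 <= k%:R * abs x ^+ k by rewrite mulr_ge0 ?ler0n.
have [/HK lt_k|lt_kK] := leqP K k.
  by apply: le_lt_trans lt_k; rewrite -[leRHS]mul1r ler_wpM2r.
apply: le_lt_trans K2_lt; rewrite natrX expr2 [leRHS]mulrAC.
apply: ler_pM; rewrite ?divr_ge0 ?ler0n // ?ler_pM2r ?invr_gt0 ?ler_nat 1?ltnW //.
by apply: le_trans (ler_wpM2l (ler0n _ _) xk_le1) _; rewrite mulr1 ler_nat ltnW.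
Qed.

Lemma log_series_lim x l : abs x < 1 -> series_sums abs (fun k => logc C k * x ^+ k) l ->
  seq_cvg_to abs (fun m => ((1 + x) ^+ (p ^ m) - 1) / (p ^ m)%:R) l.
Proof.
move=> x_lt1 sum_l e e_gt0; case: (sum_l e e_gt0) => M1 HM1.
case: (binc_logc_close x_lt1 e_gt0) => M2 HM2; exists (maxn M1 M2) => m le_m.
rewrite expp_sub1_div_sum.
have -> : \sum_(k < (p ^ m).+1) binc m k * x ^+ k - l =
    \sum_(k < (p ^ m).+1) (binc m k - logc C k) * x ^+ k +
    (\sum_(k < (p ^ m).+1) logc C k * x ^+ k - l).
  by rewrite addrA -big_split /=; congr (_ - _); apply: eq_bigr => k _; ring.
apply: absD_lt; last by apply: HM1; have := ltn_expl m (prime_gt1 p_prime); lia.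
by apply: abs_sum_lt => // k _; apply: HM2; [lia | rewrite -ltnS].
Qed.

Definition log_approx (a : C) m := (a ^+ (p ^ m) - 1) / (p ^ m)%:R.
Definition is_log a l := seq_cvg_to abs (log_approx a) l.

Lemma expp_cvg0 : seq_cvg_to abs (fun m => (p ^ m)%:R : C) 0.
Proof.
move=> e e_gt0; have inve_ge0 : 0 <= e^-1 by rewrite invr_ge0 ltW.
exists (Num.bound e^-1) => m le_m; rewrite subr0 abs_natr_expp.
have lt_mq := ltn_expl m (prime_gt1 p_prime).
rewrite -[e]invrK ltf_pV2 ?posrE ?invr_gt0 ?ltr0n //; last lia.
by apply: lt_trans (archi_boundP inve_ge0) _; rewrite ltr_nat; lia.
Qed.

Lemma is_log1 : is_log 1 0.
Proof.
apply: (cvg_to_eventually (M0 := 0)) (cvg_to_cst 0) => m _.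
by rewrite /log_approx expr1n subrr mul0r.
Qed.

(* [(ab)^q - 1 = (a^q - 1) + (b^q - 1) + q ((a^q - 1)/q) ((b^q - 1)/q)], and the last
   term tends to [0] with [q = p^m]. *)
Lemma is_logM a b la lb : is_log a la -> is_log b lb -> is_log (a * b) (la + lb).
Proof.
move=> log_a log_b.
have := cvg_toD (cvg_toD log_a log_b) (cvg_toM (cvg_toM expp_cvg0 log_a) log_b).
rewrite !mul0r addr0; apply: (cvg_to_eventually (M0 := 0)) => m _.
have q_neq0 : ((p ^ m)%:R : C) != 0 by rewrite natrC_neq0 // expn_gt0 prime_gt0.
by rewrite /log_approx exprMn; field.
Qed.

Lemma is_logX a la n : is_log a la -> is_log (a ^+ n) (n%:R * la).
Proof.
move=> log_a; elim: n => [|n IH]; first by rewrite expr0 mul0r; exact: is_log1.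
by rewrite exprS -natr1 mulrDl mul1r addrC; apply: is_logM.
Qed.

Lemma is_log_root z n : z ^+ (p ^ n) = 1 -> is_log z 0.
Proof.
move=> z_root; apply: (cvg_to_eventually (M0 := n)) (cvg_to_cst 0) => m le_nm.
by rewrite /log_approx -(subnKC le_nm) expnD exprM z_root expr1n subrr mul0r.
Qed.

Definition near1 (a : C) := abs (a - 1) < 1.

Lemma near1_abs a : near1 a -> abs a = 1.
Proof. by move=> a_near1; rewrite -(subrK 1 a) addrC abs_addr_small abs1. Qed.

Lemma near1M a b : near1 a -> near1 b -> near1 (a * b).
Proof.
rewrite /near1 => a_near1 b_near1.
have -> : a * b - 1 = (a - 1) * (b - 1) + (a - 1) + (b - 1) by ring.
apply: absD_lt => //; apply: absD_lt => //; rewrite absM.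
by have := abs_ge0 (a - 1); have := abs_ge0 (b - 1); nra.
Qed.

Lemma near1V a : near1 a -> near1 a^-1.
Proof.
move=> a_near1; have abs_a := near1_abs a_near1.
have a_neq0 : a != 0 by rewrite -abs_eq0 abs_a oner_eq0.
rewrite /near1; have -> : a^-1 - 1 = a^-1 * (1 - a) by rewrite mulrBr mulr1 mulVf.
by rewrite absM absV abs_a invr1 mul1r absB.
Qed.

Lemma near1X a n : near1 a -> near1 (a ^+ n).
Proof.
move=> a_near1; elim: n => [|n IH]; first by rewrite /near1 expr0 subrr abs0.
by rewrite exprS; apply: near1M.
Qed.

Lemma near1_exprz a (j : int) : near1 a -> near1 (a ^ j).
Proof.
move=> a_near1; case: j => n; first by rewrite -exprnP; apply: near1X.
by rewrite NegzE -exprnN; apply/near1V/near1X.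
Qed.

(* The middle binomial terms are small because [p] divides [C(p, i)] for [0 < i < p]. *)
Lemma abs_expp_sub1 y : 1 <= abs y -> abs ((1 + y) ^+ p - 1) = abs y ^+ p.
Proof.
move=> y_ge1; have max_neq0 : (ord_max : 'I_p.+1) != ord0.
  by rewrite -val_eqE /= -lt0n prime_gt0.
rewrite [1 + y]addrC exprD1n (bigD1 ord0) // (bigD1 ord_max) //= expr0 bin0 binn !mulr1n.
rewrite addrAC subrr add0r abs_addr_small absX //.
apply: abs_sum_lt => [|i /andP[i_neq0 i_neqp]].
  by rewrite exprn_gt0 // (lt_le_trans ltr01).
have lt_ip : (0 < i < p)%N.
  by move: i_neq0 i_neqp; rewrite -!val_eqE /=; have := ltn_ord i; lia.
case/dvdnP: (prime_dvd_bin p_prime lt_ip) => c ->.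
rewrite -mulr_natr absM natrM absM absp absX.
apply: (@le_lt_trans _ _ (abs y ^+ p * p%:R^-1)).
  apply: ler_pM; rewrite ?exprn_ge0 ?abs_ge0 ?mulr_ge0 ?invr_ge0 ?ler0n //.
    by rewrite ler_weXn2l //; case/andP: lt_ip => _ /ltnW.
  by rewrite -[leRHS]mul1r ler_wpM2r ?invr_ge0 ?ler0n ?abs_natr_le1.
by rewrite -[ltRHS]mulr1 ltr_pM2l ?exprn_gt0 ?(lt_le_trans ltr01) // -absp absp_lt1.
Qed.

Lemma near1_root z n : z ^+ (p ^ n) = 1 -> near1 z.
Proof.
elim: n z => [|n IH] z z_root.
  by move: z_root; rewrite /near1 expn0 expr1 => ->; rewrite subrr abs0.
have zp_near1 : near1 (z ^+ p) by apply: IH; rewrite -exprM -expnS.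
rewrite /near1 ltNge; apply/negP => z_far.
move: zp_near1; rewrite /near1; have := abs_expp_sub1 z_far.
by rewrite [1 + _]addrC subrK => ->; rewrite ltNge exprn_ege1.
Qed.

Lemma is_log_series x l : near1 x ->
  series_sums abs (fun k => logc C k * (x - 1) ^+ k) l -> is_log x l.
Proof. by move=> x_near1 /(log_series_lim x_near1); rewrite addrC subrK. Qed.

Lemma is_log_exprz a (j : int) la : near1 a -> is_log a la -> is_log (a ^ j) (j%:~R * la).
Proof.
move=> a_near1 log_a; case: j => n; first by rewrite -exprnP; apply: is_logX.
rewrite NegzE -exprnN; have an1_near1 := near1V (near1X n.+1 a_near1).
have [l' sum_l'] := log_series_ex an1_near1; have log_l' := is_log_series an1_near1 sum_l'.
have an1_neq0 : a ^+ n.+1 != 0 by rewrite -abs_eq0 near1_abs ?oner_eq0 ?near1X.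
have := is_logM (is_logX n.+1 log_a) log_l'; rewrite divff // => /(cvg_to_uniq is_log1).
move=> sum_eq0; suff -> : (- n.+1%:Z)%:~R * la = l' by [].
by rewrite mulrNz mulNr; apply/eqP; rewrite eq_sym -addr_eq0 addrC -sum_eq0.
Qed.

Lemma log_series_exprz_root (a z : C) n (j : int) la lx : near1 a -> z ^+ (p ^ n) = 1 ->
  series_sums abs (fun k => logc C k * (a - 1) ^+ k) la ->
  series_sums abs (fun k => logc C k * (a ^ j * z - 1) ^+ k) lx -> lx = j%:~R * la.
Proof.
move=> a_near1 z_root sum_a sum_x.
have x_near1 : near1 (a ^ j * z).
  by apply: near1M; [apply: near1_exprz | apply: near1_root z_root].
have := is_logM (is_log_exprz j a_near1 (is_log_series a_near1 sum_a)) (is_log_root z_root).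
by rewrite addr0; apply: cvg_to_uniq (is_log_series x_near1 sum_x).
Qed.

Section Evaluation.
Variables (F : fieldType) (iota : {rmorphism F -> C}).

Definition ps_sums (x : C) (a : powser F) (l : C) :=
  series_sums abs (fun k => iota (coefps a k) * x ^+ k) l.

Lemma ps_sums_uniq x a l1 l2 : ps_sums x a l1 -> ps_sums x a l2 -> l1 = l2.
Proof. exact: cvg_to_uniq. Qed.

Lemma ps_sums_cst x c : ps_sums x (constps c) (iota c).
Proof.
apply: (cvg_to_eventually (M0 := 1)) (cvg_to_cst (iota c)) => -[//|m] _.
by rewrite big_ord_recl /= mulr1 big1 ?addr0 // => k _; rewrite rmorph0 mul0r.
Qed.

Lemma ps_sums0 x : ps_sums x 0 0.
Proof.
apply: (cvg_to_eventually (M0 := 0)) (cvg_to_cst 0) => m _.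
by rewrite big1 // => k _; rewrite rmorph0 mul0r.
Qed.

Lemma ps_sums1 x : ps_sums x 1 1.
Proof.
have := ps_sums_cst x 1; rewrite rmorph1; apply: (cvg_to_eventually (M0 := 0)) => m _.
by apply: eq_bigr => k _ /=; case: (k == 0%N :> nat).
Qed.

Lemma ps_sumsB x a b A B : ps_sums x a A -> ps_sums x b B -> ps_sums x (a - b) (A - B).
Proof.
move=> sum_a sum_b; apply: (cvg_to_eventually (M0 := 0)) (cvg_toB sum_a sum_b) => m _.
by rewrite -sumrB; apply: eq_bigr => k _; rewrite rmorphB mulrBl.
Qed.

Lemma ps_sumsM x a b A B : ps_sums x a A -> ps_sums x b B -> ps_sums x (a * b) (A * B).
Proof.
move=> sum_a sum_b; apply: (cvg_to_eventually (M0 := 0)) (series_sumsM sum_a sum_b) => m _.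
apply: eq_bigr => k _; rewrite coefpsM /hmul rmorph_sum mulr_suml; apply: eq_bigr => i _.
by rewrite rmorphM mulrACA -exprD subnKC // -ltnS.
Qed.

Lemma ps_sums_prod x n (f : 'I_n -> powser F) (vals : 'I_n -> C) :
  (forall i, ps_sums x (f i) (vals i)) -> ps_sums x (\prod_i f i) (\prod_i vals i).
Proof.
elim: n f vals => [|n IH] f vals sum_f; first by rewrite !big_ord0; exact: ps_sums1.
by rewrite !big_ord_recr /=; apply: ps_sumsM => //; apply: IH.
Qed.

Definition logps := Powser (logc F).

Lemma ps_sums_logpsE x l :
  ps_sums x logps l = series_sums abs (fun k => logc C k * x ^+ k) l.
Proof.
congr series_sums; apply/funext => k /=; congr (_ * _).
by rewrite /logc; case: eqP; rewrite ?rmorph0 // fmorph_div rmorphXn rmorphN1 rmorph_nat.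
Qed.

Lemma ps_sums_logps_ex x : abs x < 1 -> exists l, ps_sums x logps l.
Proof. by move=> /log_series_ex [l sum_l]; exists l; rewrite ps_sums_logpsE. Qed.

Lemma ps_sums_logps_exprz_root (a z : C) n (j : int) la lx :
  near1 a -> z ^+ (p ^ n) = 1 ->
  ps_sums (a - 1) logps la -> ps_sums (a ^ j * z - 1) logps lx -> lx = j%:~R * la.
Proof. by rewrite !ps_sums_logpsE; apply: log_series_exprz_root. Qed.

Hypothesis completeF : forall s : nat -> F, cauchy_seq (fun x => abs (iota x)) s ->
  exists l, seq_cvg_to (fun x => abs (iota x)) s l.

Lemma ps_sums_logps_in_F (x : F) :
  abs (iota x) < 1 -> exists l, ps_sums (iota x) logps (iota l).
Proof.
move=> /ps_sums_logps_ex [L sum_L].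
pose s m := \sum_(k < m) logc F k * x ^+ k.
have iota_s m : iota (s m) = \sum_(k < m) iota (coefps logps k) * iota x ^+ k.
  by rewrite rmorph_sum; apply: eq_bigr => k _; rewrite rmorphM rmorphXn.
have [|l cvg_l] := completeF (s := s).
  move=> e /(cvg_to_cauchy absD absN sum_L) [M HM]; exists M => m n le_m le_n.
  by rewrite rmorphB !iota_s; apply: HM.
by exists l => e /cvg_l [M HM]; exists M => m /HM; rewrite rmorphB iota_s.
Qed.

Lemma ps_sums_logps_factors x n (c : 'I_n -> F) Lx : ps_sums x logps Lx ->
  ps_sums x (\prod_i (logps - constps (c i))) (\prod_i (Lx - iota (c i))).
Proof.
by move=> sum_Lx; apply: ps_sums_prod => i; apply: ps_sumsB sum_Lx (ps_sums_cst _ _).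
Qed.

Lemma logps_sub_cst_neq0 c : logps - constps c != 0.
Proof.
apply/eqP => /(congr1 (fun a => coefps a 1%N)) /=.
by rewrite /logc /= subr0 expr2 mulrNN mulr1 divr1 => /eqP; rewrite oner_eq0.
Qed.

Definition inHps (a : powser F) := inH abs iota (coefps a).

Lemma inHps0 : inHps 0. Proof. by move=> z _; exists 0; apply: ps_sums0. Qed.
Lemma inHps1 : inHps 1. Proof. by move=> z _; exists 1; apply: ps_sums1. Qed.

Lemma inHpsB a b : inHps a -> inHps b -> inHps (a - b).
Proof.
move=> Ha Hb z z_lt1; have [A sum_A] := Ha z z_lt1; have [B sum_B] := Hb z z_lt1.
by exists (A - B); apply: ps_sumsB.
Qed.

Lemma inHpsM a b : inHps a -> inHps b -> inHps (a * b).
Proof.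
move=> Ha Hb z z_lt1; have [A sum_A] := Ha z z_lt1; have [B sum_B] := Hb z z_lt1.
by exists (A * B); apply: ps_sumsM.
Qed.

Lemma inHps_logps_factors n (c : 'I_n -> F) : inHps (\prod_i (logps - constps (c i))).
Proof.
move=> z /ps_sums_logps_ex [Lz sum_Lz].
by exists (\prod_i (Lz - iota (c i))); apply: ps_sums_logps_factors.
Qed.

Lemma H_dependent d (fam : 'I_d.+1 -> 'I_d -> nat -> F) :
  (forall k i, inH abs iota (fam k i)) -> ~ H_independent abs iota fam.
Proof.
move=> fam_H fam_indep.
have [|c [c_H [k1 ck1_neq0] rel_c]] := subring_dependent inHps1 inHpsB inHpsM
    (@mulps_neq0 F) (ltnSn d) (fam := fun k i => Powser (fam k i)).
  by move=> k i; apply: fam_H.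
move/negP: ck1_neq0; apply; apply/eqP/powser_ext => n.
apply: (fam_indep (fun k => coefps (c k)) c_H _ k1 n) => i m.
by rewrite -[RHS](coefps0 F m) -(rel_c i) coefps_sum.
Qed.

Lemma H_independent_diag d (f : powser F) : f != 0 ->
  H_independent abs iota (fun k i : 'I_d => if i == k then coefps f else fun _ => 0).
Proof.
move=> f_neq0 h _ rel_h k n.
have hf_eq0 : Powser (h k) * f = 0.
  apply: powser_ext => m; rewrite coefps0 coefpsM -(rel_h k m) (bigD1 k) //= eqxx.
  rewrite big1 ?addr0 // => k' /negbTE nk'.
  by rewrite eq_sym nk' /hmul big1 // => i _; rewrite mulr0.
have : Powser (h k) = 0.
  by apply/eqP/negPn/negP => /mulps_neq0 /(_ f_neq0); rewrite hf_eq0 eqxx.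
by move/(congr1 (fun a => coefps a n)).
Qed.

Lemma in_Kn_tensor_map n (zeta : C) d (M : 'M[F]_d) (W : 'rV[F]_d) :
  (p ^ n).-primitive_root zeta -> (W <= M)%MS -> in_Kn_tensor iota p n M (map_mx iota W).
Proof.
move=> zeta_prim /submxP [D ->]; exists (map_mx iota D); split; last by rewrite map_mxM.
by move=> i; exists zeta; split => //; exists (D 0 i)%:P; rewrite map_polyC hornerC mxE.
Qed.

Section RankLN.
Variables (u : F) (d : nat) (phi : 'M[F]_d) (Fil : int -> 'M[F]_d) (N : nat).

Lemma in_LN_diag (f : powser F) k : inHps f ->
  (forall j n zeta y, le_tHT Fil j -> (N <= n)%N -> (p ^ n).-primitive_root zeta ->
     ps_sums (iota u ^ j * zeta - 1) f y ->
     exists2 w : F, y = iota w & (1%:M <= Fil j)%MS \/ w = 0) ->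
  in_LN abs iota p phi Fil u N (fun i => if i == k then coefps f else fun _ => 0).
Proof.
move=> f_H f_vals; split=> [i|j n zeta le_j le_Nn zeta_prim v sum_v].
  by case: eqP => _; [apply: f_H | apply: inHps0].
have [w vk_w full_or_0] : exists2 w : F, v 0 k = iota w & (1%:M <= Fil j)%MS \/ w = 0.
  by apply: f_vals le_j le_Nn zeta_prim _; have := sum_v k; rewrite eqxx.
have -> : v = map_mx iota (\row_i (if i == k then w else 0)).
  apply/matrixP => a i; rewrite ord1 !mxE; have := sum_v i.
  case: eqP => [-> _ //|_ sum_vi]; rewrite rmorph0.
  exact: (ps_sums_uniq (a := 0) sum_vi (ps_sums0 _)).
rewrite -map_mxM; apply: in_Kn_tensor_map zeta_prim _.
case: full_or_0 => [full|->]; first exact: submx_trans (submx1 _) full.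
rewrite (_ : \row_i _ = 0) ?mul0mx ?sub0mx //.
by apply/matrixP => a i; rewrite !mxE; case: eqP.
Qed.

Hypotheses (u_near1 : near1 (iota u)) (Fil_phi : filtered_phi_module phi Fil).

Lemma rank_LN_ge : exists fam : 'I_d -> 'I_d -> nat -> F,
  (forall k, in_LN abs iota p phi Fil u N (fam k)) /\ H_independent abs iota fam.
Proof.
case: Fil_phi => _ Fil_decr Fil_exh Fil_sep.
have [j0 full_j0] := Fil_full_below Fil_decr Fil_exh.
have [T zero_T] := Fil_zero_above Fil_decr Fil_sep.
have [ell sum_ell] : exists ell, ps_sums (iota u - 1) logps (iota ell).
  by rewrite -(rmorph1 iota) -rmorphB; apply: ps_sums_logps_in_F; rewrite rmorphB rmorph1.
pose c (i : 'I_`|T - j0|) : F := (j0 + 1 + i%:Z)%:~R * ell.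
pose f := \prod_i (logps - constps (c i)).
exists (fun k i => if i == k then coefps f else fun _ => 0); split; last first.
  by apply: H_independent_diag; apply: prodps_neq0 => i; apply: logps_sub_cst_neq0.
move=> k; apply: in_LN_diag (inHps_logps_factors c) _.
move=> j n zeta y le_j le_Nn zeta_prim sum_y.
have zeta_root := prim_expr_order zeta_prim.
have [Lx sum_Lx] : exists Lx, ps_sums (iota u ^ j * zeta - 1) logps Lx.
  apply: ps_sums_logps_ex; exact: near1M (near1_exprz j u_near1) (near1_root zeta_root).
exists (\prod_i (j%:~R * ell - c i)).
  rewrite (ps_sums_uniq sum_y (ps_sums_logps_factors c sum_Lx)) rmorph_prod.
  rewrite (ps_sums_logps_exprz_root u_near1 zeta_root sum_ell sum_Lx).
  by apply: eq_bigr => i _; rewrite rmorphB rmorphM rmorph_int.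
have [/full_j0|lt_j0j] := lerP j j0; [by left | right].
have lt_jT : (absz (j - j0 - 1)%R < `|T - j0|)%N by have := le_tHT_le zero_T le_j; lia.
have c_j : c (Ordinal lt_jT) = j%:~R * ell by rewrite /c /=; congr (_%:~R * _); lia.
by rewrite (bigD1 (Ordinal lt_jT)) //= c_j subrr mul0r.
Qed.

Lemma H_rank_LN : H_rank abs iota (in_LN abs iota p phi Fil u N) d.
Proof.
split; first exact: rank_LN_ge.
by move=> fam fam_LN; apply: H_dependent => k i; apply: (fam_LN k).1.
Qed.

End RankLN.
End Evaluation.
End UltrametricField.

Theorem mainTheorem13 (p : nat) (R : realType) (C : closedFieldType) (F : fieldType)
    (abs : C -> R) (iota : {rmorphism F -> C}) (u : F)
    (d : nat) (phi : 'M[F]_d) (Fil : int -> 'M[F]_d) (N : nat) :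
  prime p -> odd p ->
  padic_setting abs iota p ->
  top_generator abs iota p u ->
  filtered_phi_module phi Fil ->
  H_rank abs iota (in_LN abs iota p phi Fil u N) d.
Proof.
move=> p_prime _ [[abs_ge0 abs_eq0] absM absD absp [complete completeF _]] [u_close _] Fil_phi.
apply: (H_rank_LN abs_ge0 abs_eq0 absM absD complete p_prime absp completeF N _ Fil_phi).
apply: le_lt_trans u_close _.
by rewrite invf_lt1 ?ltr0n ?prime_gt0 // ltr1n prime_gt1.
Qed.
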